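(* Let $n\ge 1$, let $I=\{1,\dots,n\}=I_\Sigma\cup I_{\max}$ be a partition into disjoint (possibly empty) index sets, and let $\gamma_{ij}\in\mathcal{K}_\infty\cup\{0\}$, $i,j\in I$, with $\gamma_{ii}\equiv 0$. Let $\Gamma:\mathbb{R}^n_+\to\mathbb{R}^n_+$, $D_\alpha$ and $\mu$ be as defined in the context. Assume that there exists $\alpha\in\mathcal{K}_\infty$ such that $\Gamma\circ D_\alpha(s)\not\geq s$ for all $s\in\mathbb{R}^n_+\setminus\{0\}$. Then there exists $\phi\in\mathcal{K}_\infty$ such that for all $w,v\in\mathbb{R}^n_+$ the inequality $w\le \mu(\Gamma(w),v)$ implies $\|w\|\le\phi(\|v\|)$.
   Context: $\mathbb{R}_+=[0,\infty)$, $\mathbb{R}^n_+=[0,\infty)^n$. For $x,y\in\mathbb{R}^n$: $x\ge y$ iff $x_i\ge y_i$ for all $i$; $x>y$ iff $x_i>y_i$ for all $i$; $x\not\ge y$ iff there is $i$ with $x_i<y_i$. $\|\cdot\|$ denotes a norm on $\mathbb{R}^n$. $\mathcal{K}$ is the class of continuous strictly increasing $\gamma:\mathbb{R}_+\to\mathbb{R}_+$ with $\gamma(0)=0$; $\mathcal{K}_\infty$ those in $\mathcal{K}$ that are unbounded; $\mathrm{id}$ is the identity. The operator $\Gamma(s)=(\Gamma_1(s),\dots,\Gamma_n(s))^T$ is defined by $\Gamma_i(s)=\gamma_{i1}(s_1)+\dots+\gamma_{in}(s_n)$ for $i\in I_\Sigma$ and $\Gamma_i(s)=\max\{\gamma_{i1}(s_1),\dots,\gamma_{in}(s_n)\}$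 for $i\in I_{\max}$. For $\alpha\in\mathcal{K}_\infty$, $D_\alpha(s)=(D_1(s_1),\dots,D_n(s_n))^T$ with $D_i=\mathrm{id}+\alpha$ for $i\in I_\Sigma$ and $D_i=\mathrm{id}$ for $i\in I_{\max}$. The map $\mu:\mathbb{R}^n_+\times\mathbb{R}^n_+\to\mathbb{R}^n_+$ is $\mu(w,v)=(\mu_1(w_1,v_1),\dots,\mu_n(w_n,v_n))^T$ with $\mu_i(a,b)=a+b$ for $i\in I_\Sigma$ and $\mu_i(a,b)=\max\{a,b\}$ for $i\in I_{\max}$. *)

From HB Require Import structures.
From mathcomp Require Import all_boot all_order all_algebra.
From mathcomp Require Import all_classical all_reals all_analysis.
Set Implicit Arguments. Unset Strict Implicit. Unset Printing Implicit Defensive.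
Import Order.TTheory GRing.Theory Num.Theory numFieldNormedType.Exports.
Local Open Scope ring_scope.
Local Open Scope classical_set_scope.

Section Defs.
Variable R : realType.

Definition classK (g : R -> R) : Prop :=
  g 0 = 0 /\
  {within [set x : R | 0 <= x], continuous g} /\
  (forall x y : R, 0 <= x -> x < y -> g x < g y).

Definition classKinf (g : R -> R) : Prop :=
  classK g /\ (forall M : R, exists x : R, 0 <= x /\ M <= g x).

Definition zero_on_Rplus (g : R -> R) : Prop := forall x : R, 0 <= x -> g x = 0.

Variable n : nat.

Definition vnonneg (s : 'I_n -> R) : Prop := forall i, 0 <= s i.
Definition vzero : 'I_n -> R := fun _ => 0.

Definition is_norm (N : ('I_n -> R) -> R) : Prop :=
  (forall x, N x = 0 -> x = vzero) /\
  (forall (a : R) x, N (fun i => a * x i) = `|a| * N x) /\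
  (forall x y, N (fun i => x i + y i) <= N x + N y).

(* Isum : the index set I_Sigma; its complement is I_max *)
Definition Gam (Isum : pred 'I_n) (gam : 'I_n -> 'I_n -> R -> R)
    (s : 'I_n -> R) : 'I_n -> R :=
  fun i => if i \in Isum then \sum_(j < n) gam i j (s j)
           else \big[Num.max/0]_(j < n) gam i j (s j).

Definition Dal (Isum : pred 'I_n) (alpha : R -> R) (s : 'I_n -> R) : 'I_n -> R :=
  fun i => if i \in Isum then s i + alpha (s i) else s i.

Definition muv (Isum : pred 'I_n) (w v : 'I_n -> R) : 'I_n -> R :=
  fun i => if i \in Isum then w i + v i else Num.max (w i) (v i).

End Defs.

From mathcomp Require Import all_boot all_order all_algebra.
From mathcomp Require Import all_classical all_reals all_analysis.
From mathcomp Require Import lra.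
Import Order.TTheory GRing.Theory Num.Theory numFieldNormedType.Exports.
Local Open Scope ring_scope.
Local Open Scope classical_set_scope.

Set Implicit Arguments. Unset Strict Implicit.

(* Let S be the set of coordinates of w not yet bounded and c the bound
   reached on the others.  Choose s with D_alpha s = w restricted to S
   (s_i = (id + alpha)^-1 (w_i) for i in I_Sigma); the small-gain condition at
   s gives i in S with Gam (w|S)_i < s_i, and comparing with
   w <= mu (Gam w, c) yields w_i <= beta (K c) + K c, where beta = alpha^-1 and
   K c = sum_ij gam_ij c + c.  After n rounds every coordinate is bounded by a
   continuous nondecreasing function of max_j v_j, and the equivalence of
   norms on R^n turns this into a bound phi (|v|). *)

Section ComparisonFunctions.
Variable R : realType.
Implicit Types (f g : R -> R) (x y : R).

Definition pcontinuous f := forall x, 0 <= x -> forall e, 0 < e ->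
  exists2 d, 0 < d & forall y, 0 <= y -> `|x - y| < d -> `|f x - f y| < e.

Lemma pcontinuousP f :
  {within [set x | 0 <= x], continuous f} <-> pcontinuous f.
Proof.
rewrite subspace_continuousP; split=> [fC x x0 e e0|fC x x0].
  have /cvgrPdist_lt/(_ e e0) := fC x x0.
  by rewrite /within /= => /nbhs_ballP[d d0 fd]; exists d => // y y0 xy; exact: fd.
apply/cvgrPdist_lt => e e0; have [d d0 fd] := fC x x0 e e0.
by rewrite /within /=; apply/nbhs_ballP; exists d => //= y xy y0; exact: fd.
Qed.

Lemma pcontinuous_id : pcontinuous id.
Proof. by move=> x _ e e0; exists e. Qed.

Lemma pcontinuousD f g : pcontinuous f -> pcontinuous g ->
  pcontinuous (fun x => f x + g x).
Proof.
move=> fC gC x x0 e e0; have e2 : 0 < e / 2 by rewrite divr_gt0.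
have [d1 d1_gt0 fd1] := fC x x0 _ e2; have [d2 d2_gt0 gd2] := gC x x0 _ e2.
exists (Num.min d1 d2) => [|y y0]; first by rewrite lt_min d1_gt0.
rewrite lt_min => /andP[xy1 xy2]; rewrite opprD addrACA.
by apply: le_lt_trans (ler_normD _ _) _; rewrite [e]splitr ltrD ?fd1 ?gd2.
Qed.

Lemma pcontinuousZ k f : pcontinuous f -> pcontinuous (fun x => k * f x).
Proof.
move=> fC x x0 e e0; have k1 : 0 < `|k| + 1 by rewrite ltr_wpDl.
have [d d0 fd] := fC x x0 _ (divr_gt0 e0 k1).
exists d => // y y0 xy; rewrite -mulrBr normrM.
apply: (@le_lt_trans _ _ ((`|k| + 1) * `|f x - f y|)).
  by rewrite ler_wpM2r // lerDl.
by rewrite -ltr_pdivlMl // mulrC fd.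
Qed.

Lemma pcontinuous_comp f g : pcontinuous f -> pcontinuous g ->
  (forall x, 0 <= x -> 0 <= f x) -> pcontinuous (fun x => g (f x)).
Proof.
move=> fC gC f_ge0 x x0 e e0.
have [d1 d1_gt0 gd1] := gC (f x) (f_ge0 x x0) e e0.
have [d2 d2_gt0 fd2] := fC x x0 d1 d1_gt0.
by exists d2 => // y y0 xy; rewrite gd1 ?f_ge0 ?fd2.
Qed.

Lemma pcontinuous_sum (I : Type) (r : seq I) (F : I -> R -> R) :
  (forall i, pcontinuous (F i)) -> pcontinuous (fun x => \sum_(i <- r) F i x).
Proof.
move=> FC; elim: r => [|i r IHr].
  under eq_fun do rewrite big_nil.
  by move=> x _ e e0; exists 1 => // y _ _; rewrite subrr normr0.
by under eq_fun do rewrite big_cons; exact: pcontinuousD.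
Qed.

(* Continuous, nondecreasing and zero at zero: a class containing K and 0 that
   is closed under sums, products by nonnegative constants and composition. *)
Definition weakK f :=
  [/\ f 0 = 0, pcontinuous f & forall x y, 0 <= x -> x <= y -> f x <= f y].

Lemma weakK_ge0 f x : weakK f -> 0 <= x -> 0 <= f x.
Proof. by case=> f0 _ fle x0; rewrite -f0 fle. Qed.

Lemma classK_weakK f : classK f -> weakK f.
Proof.
case=> f0 [/pcontinuousP fC flt]; split=> // x y x0.
by rewrite le_eqVlt => /predU1P[->//|/(flt _ _ x0)/ltW].
Qed.

Lemma zero_weakK f : zero_on_Rplus f -> weakK f.
Proof.
move=> fz; split=> [|x x0 e e0|x y x0 xy]; first by rewrite fz.
  by exists 1 => // y y0 _; rewrite !fz // subrr normr0.
by rewrite !fz // (le_trans x0 xy).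
Qed.

Lemma weakK_id : weakK id.
Proof. by split=> //; exact: pcontinuous_id. Qed.

Lemma weakKD f g : weakK f -> weakK g -> weakK (fun x => f x + g x).
Proof.
case=> f0 fC fle [g0 gC gle]; split=> [|//|x y x0 xy].
- by rewrite f0 g0 addr0.
- exact: pcontinuousD.
- by rewrite lerD ?fle ?gle.
Qed.

Lemma weakKZ k f : 0 <= k -> weakK f -> weakK (fun x => k * f x).
Proof.
move=> k0 [f0 fC fle]; split=> [|//|x y x0 xy].
- by rewrite f0 mulr0.
- exact: pcontinuousZ.
- by rewrite ler_wpM2l ?fle.
Qed.

Lemma weakK_comp f g : weakK f -> weakK g -> weakK (fun x => g (f x)).
Proof.
move=> fK [g0 gC gle]; have [f0 fC fle] := fK; split=> [|//|x y x0 xy].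
- by rewrite f0 g0.
- by apply: pcontinuous_comp => // x; exact: weakK_ge0.
- by rewrite gle ?fle ?weakK_ge0.
Qed.

Lemma weakK_sum (I : Type) (r : seq I) (F : I -> R -> R) :
  (forall i, weakK (F i)) -> weakK (fun x => \sum_(i <- r) F i x).
Proof.
move=> FK; elim: r => [|i r IHr].
  by under eq_fun do rewrite big_nil; exact: zero_weakK.
by under eq_fun do rewrite big_cons; exact: weakKD.
Qed.

Lemma weakK_iter k f : weakK f -> weakK (iter k f).
Proof.
move=> fK; elim: k => [|k IHk]; first exact: weakK_id.
exact: (weakK_comp IHk fK).
Qed.

Lemma weakKDid f : weakK f -> classKinf (fun x => f x + x).
Proof.
move=> fK; have [f0 fC fle] := fK; split; [split; [|split]|].
- by rewrite f0 addr0.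
- by apply/pcontinuousP/pcontinuousD => //; exact: pcontinuous_id.
- by move=> x y x0 xy; apply: ler_ltD => //; exact: fle (ltW xy).
move=> M; have M0 : 0 <= Num.max M 0 by rewrite le_max lexx orbT.
exists (Num.max M 0); split=> //.
by apply: ler_wpDl; [exact: weakK_ge0 | rewrite le_max lexx].
Qed.

Section Inverse.
Variables f g : R -> R.
Hypothesis f0 : f 0 = 0.
Hypothesis flt : forall x y, 0 <= x -> x < y -> f x < f y.
Hypothesis fgK : forall y, 0 <= y -> 0 <= g y /\ f (g y) = y.

Lemma mono_ltE x y : 0 <= x -> 0 <= y -> (f x < f y) = (x < y).
Proof.
move=> x0 y0; case: (ltgtP x y) => [xy|yx|->]; last by rewrite !ltxx.
- by rewrite flt.
- by apply/negbTE; rewrite -leNgt ltW ?flt.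
Qed.

Lemma mono_ge0 x : 0 <= x -> 0 <= f x.
Proof. by move=> x0; rewrite -f0 leNgt mono_ltE // -leNgt. Qed.

Lemma mono_can x : 0 <= x -> g (f x) = x.
Proof.
move=> x0; have [gfx0 fgfx] := fgK (mono_ge0 x0).
by case: (ltgtP (g (f x)) x) => // [/(flt gfx0)|/(flt x0)]; rewrite fgfx ltxx.
Qed.

Lemma inverse_pcontinuous : pcontinuous g.
Proof.
have g_ltE y y' : 0 <= y -> 0 <= y' -> (g y < g y') = (y < y').
  move=> y0 y'0; rewrite -[LHS]mono_ltE ?(fgK y0).1 ?(fgK y'0).1 //.
  by rewrite (fgK y0).2 (fgK y'0).2.
move=> y0 y00 e e0; set x0 := g y0; have [x00 fx0] := fgK y00.
have x0e0 : 0 <= x0 + e by rewrite addr_ge0 // ltW.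
have upper y : 0 <= y -> y < f (x0 + e) -> g y < x0 + e.
  by move=> y0' hi; rewrite -[x0 + e]mono_can // g_ltE ?mono_ge0.
have lower y : 0 <= y -> (e <= x0 -> f (x0 - e) < y) -> x0 - e < g y.
  move=> y0' lo; have [gy0 _] := fgK y0'.
  have [x0e|ex0] := ltP x0 e; first by apply: lt_le_trans gy0; rewrite subr_lt0.
  by rewrite -[x0 - e]mono_can ?subr_ge0 // g_ltE ?mono_ge0 ?subr_ge0 ?lo.
suff [d d_gt0 [d_hi d_lo]] : exists2 d, 0 < d &
    d <= f (x0 + e) - y0 /\ (e <= x0 -> d <= y0 - f (x0 - e)).
  exists d => // y y0'; rewrite ltr_distlC => /andP[yd dy].
  rewrite ltr_distlC lower ?upper //; first lra.
  by move=> /d_lo; lra.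
have d1 : 0 < f (x0 + e) - y0 by rewrite subr_gt0 -{1}fx0 mono_ltE // ltrDl.
have [x0e|ex0] := ltP x0 e.
  by exists (f (x0 + e) - y0) => //; split=> // /(lt_le_trans x0e); rewrite ltxx.
have d2 : 0 < y0 - f (x0 - e) by rewrite subr_gt0 -fx0 mono_ltE ?subr_ge0 // gtrBl.
exists (Num.min (f (x0 + e) - y0) (y0 - f (x0 - e))); first by rewrite lt_min d1.
by rewrite !ge_min !lexx orbT.
Qed.
End Inverse.

Lemma classKinf_surj f y : classKinf f -> 0 <= y -> exists2 x, 0 <= x & f x = y.
Proof.
move=> [[f0 [fC _]] f_unbdd] y0; have [M [M0 yM]] := f_unbdd y.
have fC0M : {within `[0, M], continuous f}.
  by apply: continuous_subspaceW fC => x /=; rewrite in_itv /= => /andP[].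
have y_between : Num.min (f 0) (f M) <= y <= Num.max (f 0) (f M).
  by rewrite f0 ge_min le_max y0 yM orbT.
have [x] := IVT M0 fC0M y_between.
by rewrite in_itv /= => /andP[x0 _] fx; exists x.
Qed.

Lemma classKinf_inverse f : classKinf f -> exists g, [/\ classKinf g,
  forall x, 0 <= x -> g (f x) = x & forall y, 0 <= y -> 0 <= g y /\ f (g y) = y].
Proof.
move=> fKinf; have [[f0 [_ flt]] _] := fKinf.
have [g fgK] : {g : R -> R & forall y, 0 <= y -> 0 <= g y /\ f (g y) = y}.
  apply: (@choice _ _ (fun y x => 0 <= y -> 0 <= x /\ f x = y)) => y.
  have [y0|y_lt0] := leP 0 y; last by exists 0.
  by have [x x0 fx] := classKinf_surj fKinf y0; exists x.
have gfK := mono_can f0 flt fgK.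
exists g; split=> //; split; [split; [|split]|].
- by rewrite -f0 gfK.
- exact/pcontinuousP/(inverse_pcontinuous f0 flt fgK).
- move=> y y' y0 yy'; have y'0 := le_trans y0 (ltW yy').
  have [[gy0 fgy] [gy'0 fgy']] := (fgK y y0, fgK y' y'0).
  by rewrite -(mono_ltE flt gy0 gy'0) fgy fgy'.
- move=> M; have M0 : 0 <= Num.max M 0 by rewrite le_max lexx orbT.
  exists (f (Num.max M 0)); split; first exact: weakK_ge0 (classK_weakK fKinf.1) M0.
  by rewrite gfK // le_max lexx.
Qed.
End ComparisonFunctions.

Section NormEquivalence.
Variables (R : realType) (n : nat) (N : ('I_n -> R) -> R).
Hypothesis hN : is_norm N.

Lemma normv0 : N (@vzero R n) = 0.
Proof.
case: hN => _ [normZ _].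
have := normZ 0 (@vzero R n); rewrite normr0 mul0r => <-.
by congr N; apply: funext => i; rewrite mul0r.
Qed.

Lemma normvN x : N (fun i => - x i) = N x.
Proof.
case: hN => _ [normZ _].
have := normZ (-1) x; rewrite normrN normr1 mul1r => <-.
by congr N; apply: funext => i; rewrite mulN1r.
Qed.

Lemma normv_ge0 x : 0 <= N x.
Proof.
case: hN => _ [_ normD].
have := normD x (fun i => - x i); rewrite normvN.
have -> : (fun i => x i + - x i) = @vzero R n by apply: funext => i; rewrite subrr.
by rewrite normv0 => ?; lra.
Qed.

Lemma normv_dist x y : `|N x - N y| <= N (fun i => x i - y i).
Proof.
case: hN => _ [_ normD].
have lex : N x <= N y + N (fun i => x i - y i).
  by have := normD y (fun i => x i - y i); under eq_fun do rewrite addrC subrK.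
have ley : N y <= N x + N (fun i => x i - y i).
  have := normD x (fun i => - (x i - y i)); rewrite normvN.
  by under eq_fun do rewrite opprB addrC subrK.
rewrite ler_norml; apply/andP; split; lra.
Qed.

Lemma normv_sum (I : Type) (r : seq I) (F : I -> 'I_n -> R) :
  N (fun i => \sum_(k <- r) F k i) <= \sum_(k <- r) N (F k).
Proof.
case: hN => _ [_ normD]; elim: r => [|k r IHr].
  by under eq_fun do rewrite big_nil; rewrite big_nil normv0.
under eq_fun do rewrite big_cons; rewrite big_cons.
by apply: le_trans (normD _ _) _; rewrite lerD2l.
Qed.

Definition basisv (j : 'I_n) : 'I_n -> R := fun i => (i == j)%:R.

Lemma normv_le_coord x : N x <= \sum_j `|x j| * N (basisv j).
Proof.
case: hN => _ [normZ _].
have {1}-> : x = (fun i => \sum_j x j * basisv j i).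
  apply: funext => i; rewrite (bigD1 i) //= /basisv eqxx mulr1 big1 ?addr0 //.
  by move=> j /negbTE; rewrite eq_sym => ->; rewrite mulr0.
by apply: le_trans (normv_sum _ _) _; apply: ler_sum => j _; rewrite normZ.
Qed.

Lemma normv_le_bound x c : (forall j, `|x j| <= c) ->
  N x <= c * \sum_j N (basisv j).
Proof.
move=> xc; apply: le_trans (normv_le_coord x) _; rewrite mulr_sumr.
by apply: ler_sum => j _; rewrite ler_wpM2r ?normv_ge0.
Qed.

Let Nrow (r : 'rV[R]_n) := N (fun i => r ord0 i).

Lemma row_coord_le_norm (r : 'rV[R]_n) j : `|r ord0 j| <= `|r|.
Proof. by rewrite [leRHS]/Num.norm /= mx_normrE (le_bigmax _ _ (ord0, j)). Qed.

Lemma Nrow_continuous : continuous Nrow.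
Proof.
move=> r; apply/(@cvgrPdist_lt _ _ _ (nbhs r)) => e e_gt0.
set L := \sum_j N (basisv j) + 1.
have L_gt0 : 0 < L by rewrite ltr_pwDr // sumr_ge0 // => j _; exact: normv_ge0.
near=> s; apply: le_lt_trans (normv_dist _ _) _.
apply: (@le_lt_trans _ _ (`|r - s| * L)).
  apply: le_trans (normv_le_bound (c := `|r - s|) _) _.
    by move=> j; have := row_coord_le_norm (r - s) j; rewrite !mxE.
  by rewrite ler_wpM2l // lerDl.
rewrite -ltr_pdivlMr //; near: s.
by apply: cvgr_dist_lt => //; rewrite divr_gt0.
Unshelve. all: by end_near. Qed.

Lemma coord_le_normv : (0 < n)%N ->
  exists2 C, 0 < C & forall x i, `|x i| <= C * N x.
Proof.
move=> n_gt0; pose S := [set r : 'rV[R]_n | `|r| = 1].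
have S_compact : compact S.
  apply: bounded_closed_compact.
    by apply: filterS (nbhs_pinfty_ge (num_real 1)) => M M1 r /= ->.
  exact: (continuous_closedP (Num.norm : _ -> R)).1 norm_continuous _ (@closed_eq R 1).
have S_nonempty : S !=set0.
  have one_neq0 : const_mx 1 != 0 :> 'rV[R]_n.
    by apply/eqP => /matrixP/(_ ord0 (Ordinal n_gt0)); rewrite !mxE; apply/eqP/oner_neq0.
  exists (`|const_mx 1 : 'rV[R]_n|^-1 *: const_mx 1); rewrite /S /=.
  by rewrite normrZ normfV normr_id mulVf // normr_eq0.
have [c Sc c_min] :=
  EVT_min_rV S_nonempty S_compact (continuous_subspaceT Nrow_continuous).
have m_gt0 : 0 < Nrow c.
  rewrite lt_def normv_ge0 andbT; apply/eqP => /hN.1 c0.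
  move: Sc; rewrite inE /S /=.
  suff -> : c = 0 by rewrite normr0 => /eqP; rewrite eq_sym oner_eq0.
  by apply/rowP => j; rewrite mxE; have /= := congr1 (fun x => x j) c0.
exists (Nrow c)^-1; first by rewrite invr_gt0.
move=> x i; pose r := \row_j x j.
have rE j : r ord0 j = x j by rewrite mxE.
have xi_le : `|x i| <= `|r| by rewrite -rE row_coord_le_norm.
have [r0|r_neq0] := eqVneq r 0.
  by apply: le_trans xi_le _; rewrite r0 normr0 mulr_ge0 ?invr_ge0 ?normv_ge0 ?ltW.
have r_gt0 : 0 < `|r| by rewrite normr_gt0.
have : Nrow c <= Nrow (`|r|^-1 *: r).
  by apply: c_min; rewrite inE /S /= normrZ normfV normr_id mulVf // gt_eqF.
have -> : Nrow (`|r|^-1 *: r) = `|r|^-1 * N x.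
  case: hN => _ [normZ _]; have := normZ (`|r|^-1) x.
  rewrite normfV normr_id => <-; congr N; apply: funext => j; rewrite !mxE; reflexivity.
rewrite !ler_pdivlMl // => h; apply: le_trans h.
by rewrite mulrC ler_wpM2r // ltW.
Qed.
End NormEquivalence.

Section SmallGain.
Variables (R : realType) (n : nat) (Isum : pred 'I_n).
Variable gam : 'I_n -> 'I_n -> R -> R.
Hypothesis gamK : forall i j, weakK (gam i j).

Lemma gam_le i j x y : 0 <= x -> x <= y -> gam i j x <= gam i j y.
Proof. by case: (gamK i j) => _ _; apply. Qed.

Lemma Gam_ge0 w : vnonneg w -> vnonneg (Gam Isum gam w).
Proof.
move=> w0 i; rewrite /Gam; case: ifP => _; last exact: bigmax_ge_id.
by apply: sumr_ge0 => j _; exact: weakK_ge0.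
Qed.

Definition restrictv (S : {set 'I_n}) (w : 'I_n -> R) j := if j \in S then w j else 0.

Definition gain_sum c := \sum_i \sum_j gam i j c.

Lemma gain_sum_weakK : weakK gain_sum.
Proof. by apply: weakK_sum => i; exact: weakK_sum. Qed.

Lemma gam_row_le_gain_sum i c : 0 <= c -> \sum_j gam i j c <= gain_sum c.
Proof.
move=> c0; rewrite /gain_sum [leRHS](bigD1 i) //= lerDl.
by do 2![apply: sumr_ge0 => ? _]; exact: weakK_ge0.
Qed.

Lemma gam_le_gain_sum i j c : 0 <= c -> gam i j c <= gain_sum c.
Proof.
move=> c0; apply: le_trans (gam_row_le_gain_sum i c0).
by rewrite [leRHS](bigD1 j) //= lerDl sumr_ge0 // => ? _; exact: weakK_ge0.
Qed.

Lemma Gam_le_restrict (S : {set 'I_n}) w c : vnonneg w -> 0 <= c ->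
    (forall j, j \notin S -> w j <= c) ->
  forall i, Gam Isum gam w i <=
            muv Isum (Gam Isum gam (restrictv S w)) (fun _ => gain_sum c) i.
Proof.
move=> w0 c0 wc i; set wS := restrictv S w.
have wS_ge0 j : 0 <= wS j by rewrite /wS /restrictv; case: ifP.
have gam_split j : gam i j (w j) = gam i j (wS j) \/ gam i j (w j) <= gam i j c.
  rewrite /wS /restrictv.
  by case: (boolP (j \in S)) => jS; [left | right; rewrite gam_le ?wc].
rewrite /muv /Gam; case: ifP => _.
  apply: (@le_trans _ _ (\sum_j gam i j (wS j) + \sum_j gam i j c)).
    rewrite -big_split /=; apply: ler_sum => j _.
    case: (gam_split j) => [-> | gle]; first by rewrite lerDl weakK_ge0.
    by apply: le_trans gle _; rewrite lerDr weakK_ge0.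
  by rewrite lerD2l gam_row_le_gain_sum.
apply: bigmax_le => [|j _]; first by rewrite le_max (weakK_ge0 gain_sum_weakK c0) orbT.
rewrite le_max; case: (gam_split j) => [-> | gle]; first by rewrite le_bigmax.
by rewrite (le_trans gle (gam_le_gain_sum i j c0)) orbT.
Qed.

Definition gain_id c := gain_sum c + c.

Lemma gain_id_weakK : weakK gain_id.
Proof. exact: weakKD gain_sum_weakK (@weakK_id R). Qed.

Lemma muv_le_restrict (S : {set 'I_n}) w c : vnonneg w -> 0 <= c ->
    (forall j, j \notin S -> w j <= c) ->
  forall i, muv Isum (Gam Isum gam w) (fun _ => c) i <=
            muv Isum (Gam Isum gam (restrictv S w)) (fun _ => gain_id c) i.
Proof.
move=> w0 c0 wc i; have := Gam_le_restrict w0 c0 wc i.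
rewrite /muv /gain_id; case: ifP => _ Gam_le; first by rewrite addrA lerD2r.
have G0 : 0 <= gain_sum c by exact: weakK_ge0 gain_sum_weakK c0.
rewrite ge_max (le_trans Gam_le) ?le_max2 ?lexx ?lerDl //=.
by rewrite le_max lerDr G0 orbT.
Qed.

Variables alpha beta d : R -> R.
Hypothesis alpha_Kinf : classKinf alpha.
Hypothesis beta_Kinf : classKinf beta.
Hypothesis alphaK : forall x, 0 <= x -> beta (alpha x) = x.
Hypothesis dK : forall y, 0 <= y -> 0 <= d y /\ alpha (d y) + d y = y.
Hypothesis small_gain : forall s : 'I_n -> R, vnonneg s -> s <> @vzero R n ->
  exists i, Gam Isum gam (Dal Isum alpha s) i < s i.

Definition Dinv_restrict (S : {set 'I_n}) (w : 'I_n -> R) j :=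
  if j \in S then (if j \in Isum then d (w j) else w j) else 0.

Lemma Dinv_restrict_ge0 S w : vnonneg w -> vnonneg (Dinv_restrict S w).
Proof.
move=> w0 j; rewrite /Dinv_restrict.
by case: ifP => // _; case: ifP => // _; exact: (dK (w0 j)).1.
Qed.

Lemma DalK_restrict S w : vnonneg w ->
  Dal Isum alpha (Dinv_restrict S w) = restrictv S w.
Proof.
move=> w0; apply: funext => j; rewrite /Dal /Dinv_restrict /restrictv.
case: (j \in S); case: (j \in Isum) => //; first by rewrite addrC; exact: (dK (w0 j)).2.
by case: alpha_Kinf => -[-> _] _; rewrite addr0.
Qed.

Definition coord_bound c := beta (gain_id c) + gain_id c.

Lemma coord_bound_weakK : weakK coord_bound.
Proof.
exact: (weakKD (weakK_comp gain_id_weakK (classK_weakK beta_Kinf.1))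
  gain_id_weakK).
Qed.

Lemma exists_coord_le_bound (S : {set 'I_n}) w c : vnonneg w -> 0 <= c ->
    (forall j, j \notin S -> w j <= c) ->
    (forall j, j \in S -> w j <= muv Isum (Gam Isum gam w) (fun _ => c) j) ->
  (0 < #|S|)%N -> exists2 i, i \in S & w i <= coord_bound c.
Proof.
move=> w0 c0 wc wmu /card_gt0P[i0 i0S].
set wS := restrictv S w.
have wS_mu j : j \in S -> w j <= muv Isum (Gam Isum gam wS) (fun _ => gain_id c) j.
  by move=> jS; apply: le_trans (wmu j jS) (muv_le_restrict w0 c0 wc j).
have Kc0 : 0 <= gain_id c := weakK_ge0 gain_id_weakK c0.
set s := Dinv_restrict S w; have DsE : Dal Isum alpha s = wS := DalK_restrict S w0.
have [s0|s_neq0] := pselect (s = @vzero R n).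
  exists i0 => //; have := congr1 (fun f => f i0) DsE.
  rewrite s0 /wS /restrictv i0S => <-; rewrite /Dal /vzero.
  case: alpha_Kinf => -[-> _] _; rewrite addr0 if_same.
  exact: weakK_ge0 coord_bound_weakK c0.
have [i] := small_gain (Dinv_restrict_ge0 S w0) s_neq0; rewrite DsE => Gam_lt.
have iS : i \in S.
  apply: contraT => iS; move: Gam_lt; rewrite /s /Dinv_restrict (negbTE iS) ltNge.
  by rewrite Gam_ge0 // => j; rewrite /wS /restrictv; case: ifP.
exists i => //; have := wS_mu i iS; rewrite /muv.
move: Gam_lt; rewrite /s /Dinv_restrict iS; case: ifP => _ Gam_lt wi_le.
  have [dw0 dwE] := dK (w0 i).
  have alpha_lt : alpha (d (w i)) < gain_id c.
    by rewrite -(ltrD2r (d (w i))) dwE (le_lt_trans wi_le) // addrC ltrD2l.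
  have d_lt : d (w i) < beta (gain_id c).
    rewrite -[d (w i)]alphaK //; case: beta_Kinf => -[_ [_ ->]] //.
    exact: weakK_ge0 (classK_weakK alpha_Kinf.1) dw0.
  by rewrite /coord_bound -dwE addrC lerD // ltW.
move: wi_le; rewrite le_max => /orP[/(lt_le_trans Gam_lt)|wi_le]; first by rewrite ltxx.
by apply: le_trans wi_le _; rewrite lerDr (weakK_ge0 (classK_weakK beta_Kinf.1)).
Qed.

Definition bound_step c := c + coord_bound c.

Lemma bound_step_weakK : weakK bound_step.
Proof. exact: (weakKD (@weakK_id R) coord_bound_weakK). Qed.

Lemma le_bound_step c : 0 <= c -> c <= bound_step c.
Proof. by move=> c0; rewrite lerDl (weakK_ge0 coord_bound_weakK). Qed.

Lemma le_iter_bound_step k c : 0 <= c -> c <= iter k bound_step c.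
Proof.
move=> c0; elim: k => [//|k IHk]; rewrite iterS.
exact: le_trans IHk (le_bound_step (le_trans c0 IHk)).
Qed.

Lemma coord_le_iter_bound_step w : vnonneg w -> forall k (S : {set 'I_n}) c,
    (#|S| <= k)%N -> 0 <= c -> (forall j, j \notin S -> w j <= c) ->
    (forall j, j \in S -> w j <= muv Isum (Gam Isum gam w) (fun _ => c) j) ->
  forall j, w j <= iter k bound_step c.
Proof.
move=> w0; elim=> [|k IHk] S c S_le c0 wc wmu j.
  have S0 : S =i pred0 by apply/card0_eq/eqP; rewrite -leqn0.
  by rewrite wc ?S0.
have [/card0_eq S0|S_gt0] := posnP #|S|.
  by apply: le_trans (le_iter_bound_step _ c0); rewrite wc ?S0.
have [i iS wi_le] := exists_coord_le_bound w0 c0 wc wmu S_gt0.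
have step_c0 : 0 <= bound_step c := le_trans c0 (le_bound_step c0).
rewrite iterSr; apply: (IHk (S :\ i)) => // [|j' | j'].
- by move: S_le; rewrite (cardsD1 i S) iS.
- rewrite !inE negb_and negbK => /orP[/eqP-> | /wc wj'c].
    by apply: le_trans wi_le _; rewrite lerDr c0.
  exact: le_trans wj'c (le_bound_step c0).
- rewrite !inE => /andP[_ /wmu]; move/le_trans; apply.
  by rewrite /muv; case: ifP => _; rewrite ?lerD2l ?le_max2 ?lexx ?le_bound_step.
Qed.

Lemma coord_le_iter_bound_max w v : vnonneg w -> vnonneg v ->
    (forall i, w i <= muv Isum (Gam Isum gam w) v i) ->
  forall j, w j <= iter n bound_step (\big[Num.max/0]_k v k).
Proof.
move=> w0 v0 w_le; apply: (coord_le_iter_bound_step w0 (S := [set: 'I_n])).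
- by rewrite cardsT card_ord.
- exact: bigmax_ge_id.
- by move=> j; rewrite finset.in_setT.
move=> j _; apply: le_trans (w_le j) _; rewrite /muv; case: ifP => _.
  by rewrite lerD2l le_bigmax.
by rewrite le_max2 ?lexx ?le_bigmax.
Qed.
End SmallGain.

Theorem lemma2 (R : realType) (n : nat) (Hn : (0 < n)%N)
  (Isum : pred 'I_n) (gam : 'I_n -> 'I_n -> R -> R)
  (N : ('I_n -> R) -> R) :
  is_norm N ->
  (forall i j, classKinf (gam i j) \/ zero_on_Rplus (gam i j)) ->
  (forall i, zero_on_Rplus (gam i i)) ->
  (exists alpha : R -> R, classKinf alpha /\
     forall s : 'I_n -> R, vnonneg s -> s <> @vzero R n ->
       exists i, Gam Isum gam (Dal Isum alpha s) i < s i) ->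
  exists phi : R -> R, classKinf phi /\
    forall w v : 'I_n -> R, vnonneg w -> vnonneg v ->
      (forall i, w i <= muv Isum (Gam Isum gam w) v i) ->
      N w <= phi (N v).
Proof.
move=> hN gam_class _ [alpha [alpha_Kinf small_gain]].
have gamK i j : weakK (gam i j).
  by case: (gam_class i j) => [/proj1/classK_weakK|/zero_weakK].
have [beta [beta_Kinf alphaK _]] := classKinf_inverse alpha_Kinf.
have [d [_ _ dK]] := classKinf_inverse (weakKDid (classK_weakK alpha_Kinf.1)).
have [C C_gt0 coord_le] := coord_le_normv hN Hn.
pose L := \sum_j N (@basisv R n j).
have L0 : 0 <= L by apply: sumr_ge0 => j _; exact: normv_ge0.
pose F := iter n (bound_step gam beta).
have FK : weakK F := weakK_iter n (bound_step_weakK gamK beta_Kinf).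
exists (fun r => L * F (C * r) + r); split.
  exact/weakKDid/weakKZ/(weakK_comp (weakKZ (ltW C_gt0) (@weakK_id R)) FK).
move=> w v w0 v0 w_le.
have wF := coord_le_iter_bound_max gamK alpha_Kinf beta_Kinf alphaK dK
  small_gain w0 v0 w_le.
have max_le : \big[Num.max/0]_j v j <= C * N v.
  apply: bigmax_le => [|j _]; first by rewrite mulr_ge0 ?(ltW C_gt0) ?(normv_ge0 hN).
  by rewrite -[v j]ger0_norm ?coord_le.
apply: le_trans (normv_le_bound hN (c := F (\big[Num.max/0]_j v j)) _) _.
  by move=> j; rewrite ger0_norm.
rewrite mulrC ler_wpDr ?(normv_ge0 hN) // ler_wpM2l //.
by case: FK => _ _; apply; rewrite ?bigmax_ge_id.
Qed.
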